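(* Let $0<c<1/2$. Then $$\sum_{i\in\mathrm{OPT}} w(i)\sum_{B\in\mathcal F(i)} c^{\,1+\mathrm{brank}(i,B)}\le\frac{2c}{1-c}\,w(\mathrm{OPT}).$$
   Context: Let $U$ be a finite ground set with weight function $w:U\to\mathbb{R}_{\ge0}$ taking pairwise distinct values; for $X\subseteq U$, $w(X)=\sum_{x\in X}w(x)$. Let $\mathcal F$ be a laminar family of subsets of $U$ (for any $A,B\in\mathcal F$: $A\subseteq B$, $B\subseteq A$, or $A\cap B=\emptyset$) with $U\in\mathcal F$; each $A\in\mathcal F$ has a positive integer capacity $\mu(A)$, with $\mu(A)<\mu(B)$ whenever $A\subsetneq B$. A set $X\subseteq U$ is independent iff $|X\cap A|\le\mu(A)$ for all $A\in\mathcal F$. For $i\in U$, $\mathcal F(i)$ is the set of all members of $\mathcal F$ containing $i$. For $B\in\mathcal F$, $\mathrm{OPT}(B)$ is the maximum-weight independent subset of $B$, and $\mathrm{OPT}=\mathrm{OPT}(U)$. The backward rank $\mathrm{brank}(i,B)$ is the number of elements of $\mathrm{OPT}(B)$ of weight less than $w(i)$. Standing convention of the paper: by padding $U$ with dummy elements of infinitesimal weight, one assumes $|\mathrm{OPT}(B)|=\mu(B)$ for every $B\in\mathcal F$. *)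

From HB Require Import structures.
From mathcomp Require Import all_boot all_order all_algebra.
Set Implicit Arguments. Unset Strict Implicit. Unset Printing Implicit Defensive.
Import Order.TTheory GRing.Theory Num.Theory.
Local Open Scope ring_scope.

Section LaminarDefs.
Variables (U : finType) (R : realFieldType).

Definition laminar (F : {set {set U}}) : Prop :=
  forall A B, A \in F -> B \in F ->
    [|| A \subset B, B \subset A | [disjoint A & B]].

Definition wset (w : U -> R) (X : {set U}) : R := \sum_(x in X) w x.

Definition indep (F : {set {set U}}) (mu : {set U} -> nat) (X : {set U}) : Prop :=
  forall A, A \in F -> (#|X :&: A| <= mu A)%N.

Definition is_opt (F : {set {set U}}) (mu : {set U} -> nat) (w : U -> R)
    (B OB : {set U}) : Prop :=
  [/\ OB \subset B, indep F mu OB &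
      forall X : {set U}, X \subset B -> indep F mu X -> wset w X <= wset w OB].

Definition brank (OPT : {set U} -> {set U}) (w : U -> R) (i : U) (B : {set U}) : nat :=
  #|[set j in OPT B | w j < w i]|.

End LaminarDefs.

From HB Require Import structures.
From mathcomp Require Import all_boot all_order all_algebra.
From mathcomp Require Import ring lra zify.
Set Implicit Arguments. Unset Strict Implicit. Unset Printing Implicit Defensive.
Import Order.TTheory GRing.Theory Num.Theory.
Local Open Scope ring_scope.

(* For i in OPT and B in F containing i, every
      element of OPT B heavier than i belongs to OPT ([opt_heavier_in_top],
      from the exchange property of optimal sets, [opt_exchange]).  Since
      |OPT B| = mu B, this gives mu B <= 1 + brank i B + r, where r is the
      rank of i in OPT n B ([capacity_le_ranks]); so each term c^(1+brank)
      is at most c^(mu B - r).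
   2. Abel summation over the weights ([abel_upper_sets]) reduces the
      weighted bound to an unweighted one for every upper level set S of OPT
      ([level_set_bound]).
   3. Counting.  For an independent S, the inner sums over ranks are
      geometric ([rank_geometric_sum]) and the claim becomes
        sum_(B in F) c^(mu B - |S n B|) (1 - c^|S n B|) <= 2 |S|
      ([laminar_slack_bound]).  The members of F form a tree under
      inclusion; a local inequality on powers of c holds at every node
      ([node_ineq]) and summing it over the tree telescopes
      ([tree_telescope]). *)

Section PowerInequalities.
Variables (R : realFieldType) (c : R).

Lemma expr_in01 n : 0 <= c -> c <= 1 -> 0 <= c ^+ n <= 1.
Proof. by move=> c_ge0 c_le1; rewrite exprn_ge0 // exprn_ile1. Qed.

Lemma one_subX_le n : 0 <= c -> c <= 1 -> 1 - c ^+ n <= n%:R * (1 - c).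
Proof.
move=> c_ge0 c_le1.
elim: n => [|n IH]; first by rewrite expr0 subrr mul0r.
have /andP[cn0 cn1] := expr_in01 n c_ge0 c_le1.
rewrite exprS -natr1; nra.
Qed.

Lemma one_subX_sum_le (I : Type) (r : seq I) (s : I -> nat) :
  0 <= c -> c <= 1 ->
  1 - c ^+ (\sum_(x <- r) s x) <= \sum_(x <- r) (1 - c ^+ s x).
Proof.
move=> c_ge0 c_le1.
elim: r => [|y r IH]; first by rewrite !big_nil expr0 subrr.
rewrite !big_cons exprD.
have /andP[a0 a1] := expr_in01 (s y) c_ge0 c_le1.
have /andP[b0 b1] := expr_in01 (\sum_(x <- r) s x) c_ge0 c_le1.
nra.
Qed.

Lemma two_one_subX_sum_le (I : eqType) (r : seq I) (s : I -> nat) :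
  0 <= c -> c <= 1 ->
  2 * (1 - c ^+ (\sum_(x <- r) s x)) <=
  \sum_(x <- r) (1 - c ^+ s x) * (1 + c ^+ (\sum_(y <- r) s y - s x)).
Proof.
move=> c_ge0 c_le1.
elim: r => [|y r IH]; first by rewrite !big_nil expr0 subrr mulr0.
rewrite !big_cons addKn.
set S := \sum_(x <- r) s x in IH *.
have sx_le x : x \in r -> (s x <= S)%N.
  by move=> xr; rewrite /S (big_rem x xr) leq_addr.
(* The new factor c^(s y) enters every old term: split each old term
   into its value at c^(s y) = 1 and the remainder. *)
rewrite (eq_big_seq (fun x => (1 - c ^+ s x) +
           c ^+ s y * ((1 - c ^+ s x) * c ^+ (S - s x)))); last first.
  by move=> x xr; rewrite -addnBA ?sx_le // exprD; ring.
rewrite big_split /= -mulr_sumr.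
move: IH; rewrite (eq_bigr (fun x => (1 - c ^+ s x) +
           (1 - c ^+ s x) * c ^+ (S - s x))); last by move=> x _; ring.
rewrite big_split /= => IH.
have := one_subX_sum_le r s c_ge0 c_le1; rewrite -/S => sub.
rewrite exprD.
have /andP[a0 a1] := expr_in01 (s y) c_ge0 c_le1.
have /andP[b0 b1] := expr_in01 S c_ge0 c_le1.
nra.
Qed.

(* The case c^g0 = 1 of [node_ineq] below.  When f > 0 the loose elements
   alone pay for it, since c^f <= 1/2; when f = 0 it is
   [two_one_subX_sum_le]. *)
Lemma node_ineq_top (I : eqType) (r : seq I) (s : I -> nat) (f : nat) :
  0 <= c -> c <= 1 / 2 ->
  2 * (1 - c ^+ (f + \sum_(x <- r) s x)) <=
  2 * f%:R * (1 - c) +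
  \sum_(x <- r) (1 - c ^+ s x) * (1 + c ^+ (f + \sum_(y <- r) s y - s x)).
Proof.
move=> c_ge0 c_le_half; have c_le1 : c <= 1 by lra.
set S := (\sum_(x <- r) s x)%N.
case: f => [|f]; first by rewrite add0n mulr0 mul0r add0r; exact: two_one_subX_sum_le.
have sum_ge : 1 - c ^+ S <= \sum_(x <- r) (1 - c ^+ s x) * (1 + c ^+ (f.+1 + S - s x)).
  apply: le_trans (one_subX_sum_le r s c_ge0 c_le1) _.
  rewrite big_seq [X in _ <= X]big_seq; apply: ler_sum => x _.
  have /andP[a0 a1] := expr_in01 (s x) c_ge0 c_le1.
  have /andP[b0 b1] := expr_in01 (f.+1 + S - s x) c_ge0 c_le1.
  nra.
have /andP[p0 p1] := expr_in01 f c_ge0 c_le1.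
have /andP[A0 A1] := expr_in01 S c_ge0 c_le1.
have := one_subX_le f.+1 c_ge0 c_le1; rewrite exprD exprS => loose.
have cp : c * c ^+ f <= c by nra.
nra.
Qed.

(* The local inequality at a node D of the laminar tree with children B_x
   (x in r): s x = |S n B_x|, f = number of elements of S n D in no child,
   g0 = slack of D and g x = slack of B_x.  The hypothesis says that the
   children have strictly smaller capacity than D.  The left-hand side is
   affine in z = c^g0 in [0, 1], so it suffices to check z = 0
   ([one_subX_sum_le]) and z = 1 ([node_ineq_top]). *)
Lemma node_ineq (I : eqType) (r : seq I) (s g : I -> nat) (f g0 : nat) :
  0 <= c -> c <= 1 / 2 ->
  (forall x, x \in r -> g x + s x < g0 + (f + \sum_(y <- r) s y))%N ->
  (1 - c ^+ (f + \sum_(x <- r) s x)) * (1 + c ^+ g0) <=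
  2 * f%:R * (1 - c) + \sum_(x <- r) (1 - c ^+ s x) * (1 + c ^+ (g x + 1)).
Proof.
move=> c_ge0 c_le_half; have c_le1 : c <= 1 by lra.
set S := (\sum_(x <- r) s x)%N => cap_lt.
set z := c ^+ g0.
have /andP[z0 z1] := expr_in01 g0 c_ge0 c_le1.
pose T x := (1 - c ^+ s x) * (1 + c ^+ (f + S - s x)).
have slack_le : \sum_(x <- r) (1 - c ^+ s x) * (1 + z * c ^+ (f + S - s x)) <=
                \sum_(x <- r) (1 - c ^+ s x) * (1 + c ^+ (g x + 1)).
  rewrite big_seq [X in _ <= X]big_seq; apply: ler_sum => x xr.
  have /andP[a0 a1] := expr_in01 (s x) c_ge0 c_le1.
  apply: ler_wpM2l; first lra.
  rewrite lerD2l /z -exprD; apply: ler_wiXn2l => //.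
  have := cap_lt x xr; have : (s x <= S)%N by rewrite /S (big_rem x xr) leq_addr.
  lia.
apply: le_trans _ (lerD (lexx _) slack_le).
rewrite (eq_bigr (fun x => (1 - z) * (1 - c ^+ s x) + z * T x)); last first.
  by move=> x _; rewrite /T; ring.
rewrite big_split /= -!mulr_sumr.
have bottom : 1 - c ^+ (f + S) <= 2 * f%:R * (1 - c) + \sum_(x <- r) (1 - c ^+ s x).
  have := one_subX_sum_le r s c_ge0 c_le1; have := one_subX_le f c_ge0 c_le1.
  have /andP[p0 p1] := expr_in01 f c_ge0 c_le1.
  have /andP[A0 A1] := expr_in01 S c_ge0 c_le1.
  rewrite -/S exprD; nra.
have top := node_ineq_top r s f c_ge0 c_le_half; rewrite -/S in top.
have one_sub_z : 0 <= 1 - z by rewrite subr_ge0.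
have := ler_wpM2l one_sub_z bottom; have := ler_wpM2l z0 top.
rewrite -/z; nra.
Qed.

End PowerInequalities.

Section Ranks.
Variables (R : realFieldType) (U : finType) (w : U -> R).
Hypothesis w_inj : injective w.

(* The number of elements of X strictly heavier than i; on X itself this is
   the rank of i in decreasing order of weight, counted from 0. *)
Definition nheavier (X : {set U}) (i : U) : nat := #|[set j in X | w i < w j]|.

Lemma nheavier_upper (X : {set U}) (t : R) i : t <= w i ->
  nheavier [set j in X | t <= w j] i = nheavier X i.
Proof.
move=> ti; apply: eq_card => j; rewrite !inE -andbA.
by case: (boolP (w i < w j)) => wij; rewrite ?andbF // (le_trans ti (ltW wij)).
Qed.

(* Ranks enumerate 0, ..., |X| - 1 exactly once: peel off the heaviest
   element, which has rank 0 and raises every other rank by one. *)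
Lemma sum_by_rank n (X : {set U}) (G : nat -> R) : #|X| = n ->
  \sum_(i in X) G (nheavier X i) = \sum_(k < n) G k.
Proof.
elim: n X G => [|n IH] X G cX.
  by move/eqP: cX; rewrite cards_eq0 => /eqP->; rewrite big_set0 big_ord0.
have [m0 m0X] : exists m0, m0 \in X.
  by apply/set0Pn; rewrite -card_gt0 cX.
case: (@arg_maxP _ _ _ m0 (mem X) w m0X) => m mX mmax; have {}mX : m \in X := mX.
have {}mmax j : j \in X -> w j <= w m := mmax j.
rewrite (big_setD1 m mX) big_ord_recl /=.
have -> : nheavier X m = 0%N.
  apply/eqP; rewrite cards_eq0; apply/eqP/setP => j; rewrite !inE.
  by apply/negbTE/andP => -[jX wmj]; move: (mmax j jX); rewrite leNgt wmj.
congr (_ + _); rewrite -(IH (X :\ m) (fun k => G k.+1)); last first.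
  by move: cX; rewrite (cardsD1 m) mX add1n => -[].
apply: eq_bigr => i /setD1P[im iX]; congr G.
have wim : w i < w m by rewrite lt_neqAle mmax // andbT; apply: contra im => /eqP/w_inj->.
rewrite /nheavier -[in LHS](setD1K mX) (_ : [set j in m |: (X :\ m) | w i < w j] =
  m |: [set j in X :\ m | w i < w j]); first by rewrite cardsU1 !inE eqxx.
by apply/setP => j; rewrite !inE; case: (eqVneq j m) => [->|].
Qed.

Lemma geometric_sum (c : R) (g s : nat) :
  (1 - c) * \sum_(k < s) c ^+ (g + s - k) = c ^+ (g + 1) * (1 - c ^+ s).
Proof.
elim: s => [|s IH]; first by rewrite big_ord0 expr0 subrr !mulr0.
rewrite big_ord_recl /= subn0.
rewrite (eq_bigr (fun k : 'I_s => c ^+ (g + s - k))); last first.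
  by move=> k _; congr (_ ^+ _); rewrite /bump /=; lia.
by rewrite mulrDr IH addnS !exprS !exprD expr1; ring.
Qed.

Lemma rank_geometric_sum (c : R) (m : nat) (X : {set U}) : (#|X| <= m)%N ->
  (1 - c) * \sum_(i in X) c ^+ (m - nheavier X i) =
  c ^+ (m - #|X| + 1) * (1 - c ^+ #|X|).
Proof.
move=> Xm; rewrite (sum_by_rank (fun k => c ^+ (m - k)) erefl).
by rewrite -geometric_sum subnK.
Qed.

End Ranks.

(* Split off the lightest weight w m: the remainder has weights
   w - w m, and w m multiplies the sum of d over all of X. *)
Lemma abel_upper_sets (R : realFieldType) (U : finType) (w : U -> R)
    (X : {set U}) (d : U -> R) :
  injective w -> (forall i, i \in X -> 0 <= w i) ->
  (forall i0, i0 \in X -> \sum_(i in X | w i0 <= w i) d i <= 0) ->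
  \sum_(i in X) w i * d i <= 0.
Proof.
elim: {X}#|X| {-2}X (erefl #|X|) w => [|n IH] X cX w' w'_inj w'0 upper.
  by move/eqP: cX; rewrite cards_eq0 => /eqP->; rewrite big_set0.
have [m0 m0X] : exists m0, m0 \in X by apply/set0Pn; rewrite -card_gt0 cX.
case: (@arg_minP _ _ _ m0 (mem X) w' m0X) => m mX mmin; have {}mX : m \in X := mX.
have {}mmin j : j \in X -> w' m <= w' j := mmin j.
rewrite (eq_bigr (fun i => (w' i - w' m) * d i + w' m * d i)); last by move=> i _; ring.
rewrite big_split /= -mulr_sumr -[X in _ <= X](addr0 0); apply: lerD; last first.
  rewrite mulr_ge0_le0 ?w'0 //.
  have <- : \sum_(i in X | w' m <= w' i) d i = \sum_(i in X) d i.
    by apply: eq_bigl => i /=; case: (boolP (i \in X)) => // iX; rewrite mmin.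
  exact: upper.
rewrite (big_setD1 m mX) /= subrr mul0r add0r.
apply: (IH (X :\ m)) => [||i|i0].
- by move: cX; rewrite (cardsD1 m) mX add1n => -[].
- by move=> x y /addIr /w'_inj.
- by rewrite !inE subr_ge0 => /andP[_ /mmin].
- rewrite !inE => /andP[i0m i0X].
  have wmi0 : w' m < w' i0.
    by rewrite lt_neqAle mmin // andbT; apply: contraNneq i0m => /w'_inj->.
  have <- : \sum_(i in X | w' i0 <= w' i) d i =
            \sum_(i in X :\ m | w' i0 - w' m <= w' i - w' m) d i.
    apply: eq_bigl => i; rewrite !inE lerD2r.
    by case: (eqVneq i m) => [->|] //=; rewrite mX leNgt wmi0.
  exact: upper.
Qed.

Section LaminarTree.
Variables (U : finType) (F : {set {set U}}).
Hypotheses (lamF : laminar F) (TF : [set: U] \in F).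

Lemma laminar_nested A B x : A \in F -> B \in F -> x \in A -> x \in B ->
  (A \subset B) || (B \subset A).
Proof.
move=> AF BF xA xB; case/or3P: (lamF AF BF) => [->|->|] //; first by rewrite orbT.
by move/disjointFr/(_ xA); rewrite xB.
Qed.

(* Since [set: U] \in F, the members of F form a tree under inclusion. *)
Definition parent (B : {set U}) : {set U} :=
  [arg min_(D < [set: U] | (D \in F) && (B \proper D)) #|D|].

Definition children (D : {set U}) : {set {set U}} :=
  [set B in F | (B != [set: U]) && (parent B == D)].

Lemma parent_spec B : B != [set: U] ->
  [/\ parent B \in F, B \proper parent B &
      forall D, D \in F -> B \proper D -> (#|parent B| <= #|D|)%N].
Proof.
move=> BT; have TP : ([set: U] \in F) && (B \proper [set: U]) by rewrite TF properT.
rewrite /parent; case: (@arg_minnP _ _ (fun D => (D \in F) && (B \proper D))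
  (fun D : {set U} => #|D|) TP) => D /andP[DF BD] Dmin.
by split=> // D' D'F BD'; apply: Dmin; rewrite D'F BD'.
Qed.

Lemma children_sub D B : B \in children D -> B \in F /\ B \proper D.
Proof.
by rewrite inE => /and3P[BF BT /eqP <-]; have [] := parent_spec BT.
Qed.

(* Distinct children are disjoint: nested children B1 < B2 of D would give
   |parent B1| <= |B2| < |D|. *)
Lemma children_trivIset D : trivIset (children D).
Proof.
have not_nested B1 B2 : B1 \in children D -> B2 \in children D -> B1 != B2 ->
    ~~ (B1 \subset B2).
  rewrite !inE => /and3P[_ B1T /eqP p1] /and3P[B2F B2T /eqP p2] ne.
  apply/negP => sub; have B12 : B1 \proper B2 by rewrite properEneq ne sub.
  have [_ _ min1] := parent_spec B1T; have [_ B2D _] := parent_spec B2T.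
  by have := proper_card B2D; rewrite p2 ltnNge -p1 min1.
apply/trivIsetP => B1 B2 B1k B2k ne.
have [[B1F _] [B2F _]] := (children_sub B1k, children_sub B2k).
case/or3P: (lamF B1F B2F) => // sub.
  by move: (not_nested _ _ B1k B2k ne); rewrite sub.
by move: (not_nested _ _ B2k B1k); rewrite eq_sym sub => /(_ ne).
Qed.

(* The children of D share out disjoint parts of D, so they meet any set S in
   at most |S n D| elements in total. *)
Lemma card_children D S :
  (\sum_(B in children D) #|S :&: B| <= #|S :&: D|)%N.
Proof.
have -> : (\sum_(B in children D) #|S :&: B| =
           \sum_(B in children D) \sum_(x in B | x \in S) 1)%N.
  by apply: eq_bigr => B _; rewrite -sum1_card; apply: eq_bigl => x; rewrite !inE andbC.
rewrite -big_trivIset_cond ?children_trivIset // sum1dep_card.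
apply: subset_leq_card; apply/subsetP => x.
rewrite !inE => /andP[/bigcupP[B Bk xB] ->] /=.
by have [_ /proper_sub/subsetP->] := children_sub Bk.
Qed.

(* Every non-root member of F is the child of exactly one member of F. *)
Lemma sum_children (R : Type) (idx : R) (op : Monoid.com_law idx)
    (phi : {set U} -> R) :
  \big[op/idx]_(D in F) \big[op/idx]_(B in children D) phi B =
  \big[op/idx]_(B in F | B != [set: U]) phi B.
Proof.
rewrite [RHS](partition_big parent (mem F)) /=; last first.
  by move=> B /andP[_ BT]; have [] := parent_spec BT.
by apply: eq_bigr => D _; apply: eq_bigl => B; rewrite inE andbA.
Qed.

(* Telescoping along the tree: if every node D satisfies the local inequality
   phi D + psi D <= nu D + sum over children B of (psi B - nu B), then summing
   over all nodes cancels every non-root psi and nu. *)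
Lemma tree_telescope (R : realDomainType) (phi psi nu : {set U} -> R) :
  (forall D, D \in F ->
     phi D + psi D <= nu D + \sum_(B in children D) (psi B - nu B)) ->
  \sum_(D in F) phi D + psi [set: U] <= nu [set: U].
Proof.
move=> local.
have : \sum_(D in F) (phi D + psi D) <=
       \sum_(D in F) (nu D + \sum_(B in children D) (psi B - nu B)).
  exact: ler_sum.
rewrite !big_split /= sum_children sumrB.
rewrite (bigD1 _ TF) [X in _ + X](bigD1 _ TF) [X in _ <= X + _](bigD1 _ TF) /=.
lra.
Qed.

End LaminarTree.

Section LaminarMatroid.
Variables (R : realFieldType) (U : finType) (w : U -> R).
Variables (F : {set {set U}}) (mu : {set U} -> nat).
Hypotheses (lamF : laminar F) (w_inj : injective w).

Definition tight (X A : {set U}) : bool := (mu A <= #|X :&: A|)%N.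

Lemma card_setU1I (j : U) (Y A : {set U}) :
  (#|(j |: Y) :&: A| <= (j \in A) + #|Y :&: A|)%N.
Proof.
rewrite setIUl; apply: leq_trans (leq_card_setU _ _) _; rewrite leq_add2r.
case: (boolP (j \in A)) => jA /=.
  by apply: leq_trans (subset_leq_card (subsetIl _ _)) _; rewrite cards1.
rewrite leqn0 cards_eq0 -subset0; apply/subsetP => x.
by rewrite !inE => /andP[/eqP-> jA']; rewrite jA' in jA.
Qed.

Lemma indep_setU1 X j : indep F mu X ->
  (forall A, A \in F -> j \in A -> ~~ tight X A) -> indep F mu (j |: X).
Proof.
move=> Xind no_tight A AF; apply: leq_trans (card_setU1I j X A) _.
case: (boolP (j \in A)) => jA; last exact: Xind.
by have := no_tight A AF jA; rewrite /tight -ltnNge.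
Qed.

(* Among the tight members of F containing j, laminarity yields one contained
   in all the others: take one of least cardinality. *)
Lemma min_tight_set X j A : A \in F -> j \in A -> tight X A ->
  exists2 C, C \in F & [/\ j \in C, tight X C &
    forall A', A' \in F -> j \in A' -> tight X A' -> C \subset A'].
Proof.
move=> AF jA tA; pose P A := [&& A \in F, j \in A & tight X A].
have PA : P A by apply/and3P.
case: (@arg_minnP _ _ P (fun A : {set U} => #|A|) PA) => C /and3P[CF jC tC] Cmin.
exists C => //; split=> // A' A'F jA' tA'.
case/orP: (laminar_nested lamF A'F CF jA' jC) => // A'C.
have := Cmin A'; rewrite /P A'F jA' tA' => /(_ isT) C_le.
by have /eqP-> : A' == C by rewrite eqEcard A'C.
Qed.

Lemma indep_exchange X j o C : indep F mu X -> o \in X :&: C ->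
  (forall A, A \in F -> j \in A -> tight X A -> C \subset A) ->
  indep F mu (j |: (X :\ o)).
Proof.
move=> Xind oXC Cmin A AF; apply: leq_trans (card_setU1I j _ A) _.
have := Xind A AF; rewrite setIDAC (cardsD1 o (X :&: A)) => XA.
case: (boolP (j \in A)) => jA /=; first case: (boolP (tight X A)) => tA.
- have oA : o \in X :&: A.
    by move: oXC; rewrite !inE => /andP[-> /(subsetP (Cmin A AF jA tA))].
  by rewrite oA in XA.
- move: tA; rewrite /tight -ltnNge (cardsD1 o (X :&: A)).
  by apply: leq_trans; rewrite ltnS leq_addl.
- exact: leq_trans (leq_addl _ _) XA.
Qed.

(* Otherwise adding j to X, or trading j for a lighter
   element of X n C (with C the smallest tight set around j), would give an
   independent subset of G of larger weight. *)
Lemma opt_exchange G X j :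
  is_opt F mu w G X -> j \in G -> j \notin X -> 0 < w j ->
  exists2 C, C \in F & [/\ j \in C, tight X C &
                         forall o, o \in X :&: C -> w j < w o].
Proof.
move=> [XG Xind Xopt] jG jX wj_gt0.
have jXG (Y : {set U}) : Y \subset G -> j |: Y \subset G.
  by move=> YG; rewrite subUset sub1set jG.
case: (pickP [pred A | [&& A \in F, j \in A & tight X A]]).
  move=> A /and3P[AF jA tA].
  have [C CF [jC tC Cmin]] := min_tight_set AF jA tA.
  exists C => //; split=> // o oXC.
  have oX : o \in X by case/setIP: oXC.
  have XoG := jXG _ (subset_trans (subD1set X o) XG).
  have := Xopt _ XoG (indep_exchange Xind oXC Cmin).
  rewrite /wset big_setU1 /=; last by rewrite !inE negb_and jX orbT.
  rewrite (big_setD1 o oX) /= lerD2r lt_neqAle => ->; rewrite andbT.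
  by apply: contraNneq jX => /w_inj ->.
move=> no_tight.
have no_tight' A : A \in F -> j \in A -> ~~ tight X A.
  by move=> AF jA; move: (no_tight A); rewrite /= AF jA => /negbT.
have := Xopt _ (jXG _ XG) (indep_setU1 Xind no_tight').
rewrite /wset big_setU1 //=; lra.
Qed.

Lemma tight_not_proper X Y C : C \in F -> tight X C -> indep F mu Y ->
  ~~ (X :&: C \proper Y :&: C).
Proof.
move=> CF tC Yind; apply/negP => /proper_card XY.
by rewrite /tight in tC; have := leq_trans XY (Yind C CF); rewrite ltnNge tC.
Qed.

End LaminarMatroid.

Section OptimalSets.
Variables (R : realFieldType) (U : finType) (w : U -> R).
Variables (F : {set {set U}}) (mu : {set U} -> nat) (OPT : {set U} -> {set U}).
Hypotheses (w_ge0 : forall x, 0 <= w x) (w_inj : injective w).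
Hypotheses (lamF : laminar F) (TF : [set: U] \in F).
Hypothesis opt : forall B, B \in F -> is_opt F mu w B (OPT B).

(* The exchange property of OPT U at js gives a tight
   set C, necessarily inside B (it cannot contain the lighter i), holding
   some o of OPT U outside OPT B; the exchange property of OPT B at o gives
   a tight set D for OPT B whose elements in OPT B are heavier than o, hence
   all in OPT U, so OPT U meets D in more than mu D elements. *)
Lemma heavier_escape_absurd B i js :
  B \in F -> i \in OPT [set: U] -> i \in B -> js \in OPT B ->
  js \notin OPT [set: U] -> w i < w js ->
  (forall p, p \in OPT B -> w js < w p -> p \in OPT [set: U]) -> False.
Proof.
set O := OPT [set: U]; set P := OPT B.
move=> BF iO iB jsP jsO wijs heavier_in_O.
have [PB Pind _] := opt BF; have [_ Oind _] := opt TF.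
have wjs_gt0 : 0 < w js := le_lt_trans (w_ge0 i) wijs.
have [C CF [jsC tC Cgt]] := opt_exchange lamF w_inj (opt TF) (in_setT js) jsO wjs_gt0.
have CB : C \subset B.
  case/orP: (laminar_nested lamF CF BF jsC (subsetP PB _ jsP)) => // BC.
  have : i \in O :&: C by rewrite inE iO (subsetP BC).
  by move/Cgt; rewrite ltNge (ltW wijs).
have [o /[dup] oOC /setIP[oO oC] oP] : exists2 o, o \in O :&: C & o \notin P.
  apply/exists_inP; rewrite -negb_forall_in.
  apply: contra (tight_not_proper CF tC Pind) => /forall_inP OC_P.
  apply/properP; split; last by exists js; rewrite !inE ?jsP ?jsC ?(negbTE jsO).
  by apply/subsetP => x xOC; rewrite inE OC_P //; case/setIP: xOC.
have wjso := Cgt o oOC.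
have [D DF [oD tD Dgt]] :=
  opt_exchange lamF w_inj (opt BF) (subsetP CB _ oC) oP (lt_trans wjs_gt0 wjso).
apply: (negP (tight_not_proper DF tD Oind)); apply/properP; split.
  apply/subsetP => x /[dup] xPD /setIP[xP xD]; rewrite inE xD andbT.
  exact: heavier_in_O xP (lt_trans wjso (Dgt x xPD)).
by exists o; rewrite !inE ?oO ?oD ?(negbTE oP).
Qed.

(* The elements of OPT B heavier than some i in OPT U n B all belong to
   OPT U: otherwise the heaviest offender contradicts
   [heavier_escape_absurd]. *)
Lemma opt_heavier_in_top B i j :
  B \in F -> i \in OPT [set: U] -> i \in B -> j \in OPT B -> w i < w j ->
  j \in OPT [set: U].
Proof.
move=> BF iO iB jP wij; apply/negPn/negP => jO.
pose Z := [set x in OPT B | (x \notin OPT [set: U]) && (w i < w x)].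
have jZ : j \in Z by rewrite inE jP jO wij.
case: (@arg_maxP _ _ _ j (mem Z) w jZ) => js jsZ jsmax.
have : js \in Z := jsZ; rewrite inE => /and3P[jsP jsO wijs].
apply: (heavier_escape_absurd BF iO iB jsP jsO wijs) => p pP wjsp.
apply/negPn/negP => pO; have : p \in Z by rewrite inE pP pO (lt_trans wijs wjsp).
by move/jsmax => /=; rewrite leNgt wjsp.
Qed.

(* Hence the elements of OPT B not lighter than i are i itself and elements
   of OPT U n B heavier than i, which bounds mu B = |OPT B|. *)
Lemma capacity_le_ranks B i : B \in F -> #|OPT B| = mu B ->
  i \in OPT [set: U] -> i \in B ->
  (mu B <= 1 + brank OPT w i B + nheavier w (OPT [set: U] :&: B) i)%N.
Proof.
move=> BF cardB iO iB; have [PB _ _] := opt BF.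
rewrite -cardB -(cardsID [set j | w j < w i] (OPT B)).
have -> : OPT B :&: [set j | w j < w i] = [set j in OPT B | w j < w i].
  by apply/setP => x; rewrite !inE.
rewrite /brank -addnA addnCA leq_add2l.
apply: (@leq_trans #|i |: [set j in OPT [set: U] :&: B | w i < w j]|).
  apply/subset_leq_card/subsetP => x.
  rewrite !inE -leNgt => /andP[wix xP]; case: (eqVneq x i) => //= xi.
  have wix' : w i < w x by rewrite lt_neqAle wix andbT; apply: contraNneq xi => /w_inj->.
  by rewrite wix' (opt_heavier_in_top BF iO iB xP wix') (subsetP PB _ xP).
by rewrite cardsU1 leq_add2r leq_b1.
Qed.

End OptimalSets.

Section LaminarCount.
Variables (R : realFieldType) (U : finType) (F : {set {set U}}) (mu : {set U} -> nat).
Hypotheses (lamF : laminar F) (TF : [set: U] \in F).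
Hypothesis mu_mono : forall A B, A \in F -> B \in F -> A \proper B -> (mu A < mu B)%N.
Variables (S : {set U}) (c : R).
Hypothesis S_indep : forall B, B \in F -> (#|S :&: B| <= mu B)%N.

(* It follows by [tree_telescope] from [node_ineq] applied at every node,
   with the potential psi B = (1 - c^|S n B|) (1 + c^(mu B - |S n B| + 1)). *)
Lemma laminar_slack_bound : 0 <= c -> c <= 1 / 2 ->
  \sum_(B in F) c ^+ (mu B - #|S :&: B|) * (1 - c ^+ #|S :&: B|) <= 2 * #|S|%:R.
Proof.
move=> c_ge0 c_le_half; have c_le1 : c <= 1 by lra.
pose s B := #|S :&: B|.
pose psi B := (1 - c ^+ s B) * (1 + c ^+ (mu B - s B + 1)).
pose nu B := 2 * (1 - c) * (s B)%:R.
have local D : D \in F ->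
    (1 - c) * (c ^+ (mu D - s D) * (1 - c ^+ s D)) + psi D <=
    nu D + \sum_(B in children F D) (psi B - nu B).
  move=> DF; set T := (\sum_(B <- enum (children F D)) s B)%N.
  have TD : (T <= s D)%N by rewrite /T big_enum; apply: card_children.
  have cap_lt B : B \in enum (children F D) ->
      (mu B - s B + s B < mu D - s D + (s D - T + T))%N.
    rewrite mem_enum => /(children_sub TF)[BF BD].
    by rewrite !subnK ?S_indep //; apply: mu_mono.
  have := @node_ineq _ c _ (enum (children F D)) s (fun B => mu B - s B)%N
    (s D - T) (mu D - s D) c_ge0 c_le_half cap_lt.
  rewrite subnK // big_enum /= natrB // => node.
  have TR : T%:R = \sum_(B in children F D) (s B)%:R :> R.
    by rewrite /T big_enum natr_sum.
  rewrite sumrB -mulr_sumr -TR /psi /nu exprD expr1.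
  have /andP[z0 z1] := expr_in01 (mu D - s D) c_ge0 c_le1.
  nra.
have := tree_telescope TF local.
rewrite -mulr_sumr /psi /nu /s setIT.
have /andP[a0 a1] := expr_in01 #|S| c_ge0 c_le1.
have /andP[b0 b1] := expr_in01 (mu [set: U] - #|S| + 1) c_ge0 c_le1.
set E := \sum_(B in F) _; move=> telescoped.
have : (1 - c) * (E - 2 * #|S|%:R) <= 0 by nra.
by rewrite pmulr_rle0 ?subr_le0 // subr_gt0; lra.
Qed.

Variable w : U -> R.
Hypothesis w_inj : injective w.

(* Summed over the elements i of S and the members B of F containing them,
   c^(mu B - rank of i in S n B) is at most 2c/(1 - c) per element of S:
   exchange the sums, evaluate the inner geometric sums with
   [rank_geometric_sum] and apply [laminar_slack_bound]. *)
Lemma rank_power_sum_bound : 0 < c -> c <= 1 / 2 ->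
  \sum_(i in S) \sum_(B in F | i \in B) c ^+ (mu B - nheavier w (S :&: B) i)
    <= 2 * c / (1 - c) * #|S|%:R.
Proof.
move=> c_gt0 c_le_half; have c_lt1 : 0 < 1 - c by lra.
rewrite (exchange_big_dep (mem F)) /=; last by move=> i B _ /andP[].
rewrite -(ler_pM2l c_lt1) mulrA mulrCA divff ?gt_eqF // mulr1 mulr_sumr.
rewrite (eq_bigr (fun B =>
  c * (c ^+ (mu B - #|S :&: B|) * (1 - c ^+ #|S :&: B|)))); last first.
  move=> B BF; rewrite (eq_bigl (mem (S :&: B))); last by move=> i; rewrite !inE BF.
  by rewrite rank_geometric_sum ?S_indep // exprD expr1 mulrA [_ * c]mulrC.
rewrite -mulr_sumr [2 * c]mulrC -mulrA ler_pM2l //.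
exact: laminar_slack_bound (ltW c_gt0) c_le_half.
Qed.

End LaminarCount.

(* For an independent set O and a threshold i0 in O, the elements of O at
   least as heavy as i0 satisfy [rank_power_sum_bound]: their ranks inside
   O n B only count elements above the threshold. *)
Lemma level_set_bound (R : realFieldType) (U : finType) (w : U -> R)
    (F : {set {set U}}) (mu : {set U} -> nat) (O : {set U}) (c : R) (i0 : U) :
  injective w -> laminar F -> [set: U] \in F ->
  (forall A B, A \in F -> B \in F -> A \proper B -> (mu A < mu B)%N) ->
  indep F mu O -> 0 < c -> c <= 1 / 2 ->
  \sum_(i in O | w i0 <= w i)
     (\sum_(B in F | i \in B) c ^+ (mu B - nheavier w (O :&: B) i) - 2 * c / (1 - c))
  <= 0.
Proof.
move=> w_inj lamF TF mu_mono Oind c_gt0 c_le_half.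
pose S := [set i in O | w i0 <= w i].
have S_indep B : B \in F -> (#|S :&: B| <= mu B)%N.
  move=> BF; apply: leq_trans (Oind B BF); apply/subset_leq_card/subsetP => x.
  by rewrite !inE => /andP[/andP[-> _] ->].
have -> : \sum_(i in O | w i0 <= w i) (\sum_(B in F | i \in B)
              c ^+ (mu B - nheavier w (O :&: B) i) - 2 * c / (1 - c)) =
          \sum_(i in S) (\sum_(B in F | i \in B)
              c ^+ (mu B - nheavier w (S :&: B) i) - 2 * c / (1 - c)).
  apply: eq_big => [i|i]; first by rewrite inE.
  move=> /andP[_ i0i]; congr (_ - _); apply: eq_bigr => B _.
  rewrite -(nheavier_upper (O :&: B) i0i); congr (_ ^+ (_ - nheavier _ _ _)).
  by apply/setP => j; rewrite !inE andbAC.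
rewrite sumrB sumr_const subr_le0 -(mulr_natr (2 * c / (1 - c))).
exact (rank_power_sum_bound lamF TF mu_mono S_indep w_inj c_gt0 c_le_half).
Qed.

Theorem lemma4 (R : realFieldType) (U : finType) (w : U -> R)
    (F : {set {set U}}) (mu : {set U} -> nat) (OPT : {set U} -> {set U})
    (c : R) :
  (forall x, 0 <= w x) ->
  injective w ->
  laminar F ->
  [set: U] \in F ->
  (forall A, A \in F -> (0 < mu A)%N) ->
  (forall A B, A \in F -> B \in F -> A \proper B -> (mu A < mu B)%N) ->
  (forall B, B \in F -> is_opt F mu w B (OPT B)) ->
  (forall B, B \in F -> #|OPT B| = mu B) ->
  0 < c -> c < 1 / 2 ->
  \sum_(i in OPT [set: U]) w i * (\sum_(B in F | i \in B) c ^+ (1 + brank OPT w i B))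
    <= (2 * c) / (1 - c) * wset w (OPT [set: U]).
Proof.
move=> w_ge0 w_inj lamF TF _ mu_mono opt cardOPT c_gt0 c_lt_half.
have [_ Oind _] := opt _ TF; set O := OPT [set: U] in Oind *.
pose coef i := \sum_(B in F | i \in B) c ^+ (mu B - nheavier w (O :&: B) i).
(* Each backward rank is at least mu B - 1 - (number of heavier elements of
   O n B), by [capacity_le_ranks]. *)
apply: (@le_trans _ _ (\sum_(i in O) w i * coef i)).
  apply: ler_sum => i iO; apply/ler_wpM2l/ler_sum => // B /andP[BF iB].
  apply: ler_wiXn2l; [exact: ltW | lra |].
  have := capacity_le_ranks w_ge0 w_inj lamF TF opt BF (cardOPT B BF) iO iB.
  by rewrite -/O; lia.
rewrite -subr_ge0 /wset mulr_sumr -sumrB -oppr_le0 -sumrN.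
rewrite (eq_bigr (fun i => w i * (coef i - 2 * c / (1 - c)))) => [|i _]; last by ring.
apply: abel_upper_sets => // i0 _.
exact: level_set_bound w_inj lamF TF mu_mono Oind c_gt0 (ltW c_lt_half).
Qed.
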